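(* Let $\mathbb{F}$ be a field and let $q\in\mathbb{F}$ be a root of unity with $q\neq 1$; let $p\geq 2$ be the least positive integer with $q^p=1$. Let $\mathcal{H}$ be the unital associative $\mathbb{F}$-algebra generated by $A,B$ subject to $AB-qBA=I$, with $[f,g]=fg-gf$ and $\Lambda:=AB-BA$. Call an element of $\mathcal{H}$ a ''special basis element'' if it is of the form $B^m\Lambda^n$ or $\Lambda^nA^m$ with $m,n$ positive integers both congruent to $0$ modulo $p$. Then for every $m,k\in\mathbb{N}$ and every $n,l\in\mathbb{Z}^+$, each of the commutators $$[\Lambda^m,\Lambda^kA^l],\quad [\Lambda^m,B^l\Lambda^k],\quad [\Lambda^mA^n,\Lambda^kA^l],\quad [\Lambda^mA^n,B^l\Lambda^k]\ \ (n\neq l),\quad [B^n\Lambda^m,B^l\Lambda^k],$$ when expanded as a linear combination of the basis $\{\Lambda^k,\ \Lambda^kA^l,\ B^l\Lambda^k : k\in\mathbb{N},\ l\in\mathbb{Z}^+\}$ of $\mathcal{H}$, has coefficient zero at every special basis element.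
   Context: $\mathbb{N}$ denotes the nonnegative integers, $\mathbb{Z}^+$ the positive integers, $f^0=I$. The elements $\Lambda^k$, $\Lambda^kA^l$, $B^l\Lambda^k$ ($k\in\mathbb{N}$, $l\in\mathbb{Z}^+$) form a basis of $\mathcal{H}$. *)

From HB Require Import structures.
From mathcomp Require Import all_boot all_order all_algebra.
Set Implicit Arguments. Unset Strict Implicit. Unset Printing Implicit Defensive.
Import Order.TTheory GRing.Theory Num.Theory.
Local Open Scope ring_scope.

Definition comm (R : ringType) (f g : R) : R := f * g - g * f.

(* Index set of the standard basis of H:
     inl (inl k)      ~  Lambda^k                     (k in N)
     inl (inr (k,l))  ~  Lambda^k A^(l+1)             (k in N, l+1 in Z^+)
     inr (l,k)        ~  B^(l+1) Lambda^k             (l+1 in Z^+, k in N) *)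
Definition hidx := ((nat + (nat * nat)) + (nat * nat))%type.

Definition special_idx (p : nat) (i : hidx) : bool :=
  match i with
  | inl (inl _) => false
  | inl (inr (n, m')) => (0 < n)%N && (p %| n)%N && (p %| m'.+1)%N
  | inr (m', n) => (0 < n)%N && (p %| n)%N && (p %| m'.+1)%N
  end.

Section Basis.
Variables (F : fieldType) (H : algType F) (A B : H).

Definition Lam : H := A * B - B * A.

Definition hbas (i : hidx) : H :=
  match i with
  | inl (inl k) => Lam ^+ k
  | inl (inr (k, l)) => Lam ^+ k * A ^+ l.+1
  | inr (l, k) => B ^+ l.+1 * Lam ^+ k
  end.

Definition expansion (s : seq hidx) (c : hidx -> F) (x : H) : Prop :=
  uniq s /\ x = \sum_(i <- s) c i *: hbas i.

Definition is_std_basis : Prop :=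
  (forall (s : seq hidx) (c : hidx -> F),
      uniq s -> \sum_(i <- s) c i *: hbas i = 0 -> forall i, i \in s -> c i = 0)
  /\ (forall x : H, exists s c, expansion s c x).

Definition zero_at_special (p : nat) (x : H) : Prop :=
  forall s c, expansion s c x -> forall i, i \in s -> special_idx p i -> c i = 0.
End Basis.

(* Lambda = AB - BA q-commutes with both generators: A Lambda = q Lambda A and
   Lambda B = q B Lambda.  Hence A^n f(Lambda) = f(q^n Lambda) A^n for every
   polynomial f, and, since (q - 1) BA = Lambda - 1 and (q - 1) AB = q Lambda - 1,
   B^l A^l = Q(Lambda) and A^l B^l = Q(q^l Lambda) for a single polynomial Q.
   Up to a nonzero scalar, each commutator is therefore f(Lambda) A^e or
   B^e f(Lambda) for an explicit f: c Lambda^s with c a difference of two powers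
   of q in the unmixed cases, Lambda^s (q^a Q(q^b Lambda) - Q(Lambda)) in the
   mixed one.  At Lambda^i A^e or B^e Lambda^i with p dividing i and e, every
   power of q that occurs has exponent divisible by p, so q^p = 1 cancels the
   coefficient; uniqueness of expansions in the basis transfers this to every
   expansion. *)

From HB Require Import structures.
From mathcomp Require Import all_boot all_order all_algebra.
From mathcomp Require Import ring.
Set Implicit Arguments.
Unset Strict Implicit.
Unset Printing Implicit Defensive.
Import GRing.Theory.
Local Open Scope ring_scope.

Section Dilate.
Variable R : comNzRingType.

Definition dilate (c : R) (P : {poly R}) : {poly R} := P \Po (c *: 'X).

Lemma coef_dilate c P i : (dilate c P)`_i = c ^+ i * P`_i.
Proof.
elim/poly_ind: P i => [|P b IH] i; first by rewrite /dilate comp_poly0 !coef0 mulr0.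
rewrite /dilate comp_poly_MXaddC -scalerAr !coefD !coefC coefZ !coefMX.
by case: i => [|i] /=; rewrite ?mulr0 ?add0r ?expr0 ?mul1r // IH !addr0 exprS mulrA.
Qed.

Lemma dilate1 P : dilate 1 P = P.
Proof. by rewrite /dilate scale1r comp_polyXr. Qed.

Lemma dilate_dilate c d P : dilate c (dilate d P) = dilate (d * c) P.
Proof. by rewrite /dilate -comp_polyA comp_polyZ comp_polyX scalerA. Qed.

Lemma dilateM c P Q : dilate c (P * Q) = dilate c P * dilate c Q.
Proof. exact: comp_polyM. Qed.

Lemma dilateXn c k : dilate c 'X^k = c ^+ k *: 'X^k.
Proof. by rewrite /dilate rmorphXn /= comp_polyX exprZn. Qed.

Lemma coef_XnM_dilateB s c d P i :
  ('X^s * (c *: dilate d P - P))`_i =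
  if (i < s)%N then 0 else (c * d ^+ (i - s) - 1) * P`_(i - s).
Proof.
by rewrite coefXnM; case: ltnP => // _; rewrite coefB coefZ coef_dilate mulrA mulrBl mul1r.
Qed.

End Dilate.

Section HornerAlg.
Variables (R : comNzRingType) (H : algType R) (x : H).

Lemma horner_alg_Xn i : horner_alg x 'X^i = x ^+ i.
Proof. by rewrite rmorphXn /= horner_algX. Qed.

Lemma horner_algZXn (c : R) i : horner_alg x (c *: 'X^i) = c *: x ^+ i.
Proof. by rewrite linearZ /= horner_alg_Xn mulr_algl. Qed.

Lemma horner_alg_coef P : horner_alg x P = \sum_(i < size P) P`_i *: x ^+ i.
Proof.
rewrite -{1}(coefK P) poly_def rmorph_sum; apply: eq_bigr => i _.
by rewrite -mul_polyC rmorphM /= horner_algC horner_alg_Xn mulr_algl.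
Qed.

End HornerAlg.

Section HornerDilate.
Variables (R : comNzRingType) (H : algType R) (x a : H) (c : R).
Hypothesis mul_ax : a * x = c *: (x * a).

Lemma mul_horner_dilate P : a * horner_alg x P = horner_alg x (dilate c P) * a.
Proof.
elim/poly_ind: P => [|P b IH]; first by rewrite /dilate comp_poly0 rmorph0 mulr0 mul0r.
rewrite /dilate comp_poly_MXaddC !rmorphD !rmorphM /= !horner_algC !horner_algX.
rewrite -/(dilate c P) mulrDr mulrDl mulrA IH -(mulrA _ a x) mul_ax linearZ /= horner_algX.
by rewrite (mulr_algl c x) -!scalerAr -scalerAl mulrA mulr_algl mulr1.
Qed.

Lemma expr_mul_horner n P :
  a ^+ n * horner_alg x P = horner_alg x (dilate (c ^+ n) P) * a ^+ n.
Proof.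
elim: n P => [|n IH] P; first by rewrite !expr0 mul1r mulr1 dilate1.
by rewrite exprS -mulrA IH mulrA mul_horner_dilate dilate_dilate -mulrA -exprSr.
Qed.

Lemma expr_mul_expr n k : a ^+ n * x ^+ k = c ^+ (n * k) *: (x ^+ k * a ^+ n).
Proof.
rewrite -[in LHS](horner_alg_Xn x k) expr_mul_horner dilateXn horner_algZXn.
by rewrite -scalerAl exprM.
Qed.

End HornerDilate.

Section HornerDilateRight.
Variables (F : fieldType) (H : algType F) (x a : H) (c : F).
Hypotheses (c_neq0 : c != 0) (mul_xa : x * a = c *: (a * x)).

Let mul_ax : a * x = c^-1 *: (x * a).
Proof. by rewrite mul_xa scalerA mulVf // scale1r. Qed.

Lemma horner_mul_expr n P :
  horner_alg x P * a ^+ n = a ^+ n * horner_alg x (dilate (c ^+ n) P).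
Proof.
rewrite (expr_mul_horner mul_ax) dilate_dilate -exprMn mulrV ?unitfE //.
by rewrite expr1n dilate1.
Qed.

End HornerDilateRight.

Lemma big_mkcond_subseq (T : eqType) (V : nmodType) (s u : seq T) (f : T -> V) :
  uniq s -> uniq u -> {subset s <= u} ->
  \sum_(j <- u) (if j \in s then f j else 0) = \sum_(j <- s) f j.
Proof.
move=> us uu su; rewrite -big_mkcond -big_filter; apply: perm_big.
apply: uniq_perm; rewrite ?filter_uniq // => j; rewrite mem_filter.
by case: (boolP (j \in s)) => // /su ->.
Qed.

Section Expansion.
Variables (F : fieldType) (H : algType F) (A B : H) (p : nat).
Hypothesis hbas_free : forall (s : seq hidx) (c : hidx -> F),
  uniq s -> \sum_(i <- s) c i *: hbas A B i = 0 -> forall i, i \in s -> c i = 0.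
Local Notation L := (Lam A B).

Lemma expansion_unique s c t d x : expansion A B s c x -> expansion A B t d x ->
  forall i, (if i \in s then c i else 0) = (if i \in t then d i else 0).
Proof.
move=> [us xs] [ut xt] i.
pose u := undup (s ++ t).
pose e j := (if j \in s then c j else 0) - (if j \in t then d j else 0).
have su : {subset s <= u} by move=> j js; rewrite mem_undup mem_cat js.
have tu : {subset t <= u} by move=> j jt; rewrite mem_undup mem_cat jt orbT.
have sum_e : \sum_(j <- u) e j *: hbas A B j = 0.
  rewrite (eq_bigr (fun j => (if j \in s then c j *: hbas A B j else 0)
                          - (if j \in t then d j *: hbas A B j else 0))); last first.
    by move=> j _; rewrite scalerBl; case: (j \in s); case: (j \in t); rewrite ?scale0r.
  by rewrite sumrB !big_mkcond_subseq ?undup_uniq // -xs -xt subrr.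
apply/eqP; rewrite -subr_eq0 -/(e i); apply/eqP.
case: (boolP (i \in u)) => [iu | /negP niu].
  exact: hbas_free (undup_uniq _) sum_e i iu.
rewrite /e; case: ifPn => [/su // | _]; case: ifPn => [/tu // | _].
by rewrite subrr.
Qed.

Lemma zero_at_special_expansion t d x : expansion A B t d x ->
  (forall i, i \in t -> special_idx p i -> d i = 0) -> zero_at_special A B p x.
Proof.
move=> xt dt s c xs i si spi; have := expansion_unique xs xt i.
by rewrite si; case: ifP => // it ->; exact: dt.
Qed.

Lemma zero_at_specialZ (a : F) x :
  a != 0 -> zero_at_special A B p (a *: x) -> zero_at_special A B p x.
Proof.
move=> a0 zax s c [us xs] i si spi; apply/eqP.
rewrite -(mulrI_eq0 _ (lregP a0)); apply/eqP.
apply: (zax s (fun j => a * c j)) => //; split => //.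
by rewrite xs scaler_sumr; apply: eq_bigr => j _; rewrite scalerA.
Qed.

Lemma expansion_horner_mulA (P : {poly F}) d :
  expansion A B [seq inl (inr (i, d)) | i <- index_iota 0 (size P)]
    (fun j => if j is inl (inr (i, _)) then P`_i else 0) (horner_alg L P * A ^+ d.+1).
Proof.
split; first by rewrite map_inj_uniq ?iota_uniq // => i j [].
rewrite big_map big_mkord horner_alg_coef mulr_suml.
by apply: eq_bigr => i _; rewrite scalerAl.
Qed.

Lemma expansion_mulB_horner (P : {poly F}) d :
  expansion A B [seq inr (d, i) | i <- index_iota 0 (size P)]
    (fun j => if j is inr (_, i) then P`_i else 0) (B ^+ d.+1 * horner_alg L P).
Proof.
split; first by rewrite map_inj_uniq ?iota_uniq // => i j [].
rewrite big_map big_mkord horner_alg_coef mulr_sumr.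
by apply: eq_bigr => i _; rewrite scalerAr.
Qed.

Lemma zero_at_special_horner_mulA (P : {poly F}) e : (0 < e)%N ->
  ((p %| e)%N -> forall i, (p %| i)%N -> P`_i = 0) ->
  zero_at_special A B p (horner_alg L P * A ^+ e).
Proof.
case: e => // d _ hP; apply: zero_at_special_expansion (expansion_horner_mulA P d) _.
by move=> _ /mapP [i _ ->] /andP [/andP [_ hi] hd]; exact: hP.
Qed.

Lemma zero_at_special_mulB_horner (P : {poly F}) e : (0 < e)%N ->
  ((p %| e)%N -> forall i, (p %| i)%N -> P`_i = 0) ->
  zero_at_special A B p (B ^+ e * horner_alg L P).
Proof.
case: e => // d _ hP; apply: zero_at_special_expansion (expansion_mulB_horner P d) _.
by move=> _ /mapP [i _ ->] /andP [/andP [_ hi] hd]; exact: hP.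
Qed.

End Expansion.

Section QWeyl.
Variables (F : fieldType) (q : F) (H : algType F) (A B : H).
Hypothesis hrel : A * B - q *: (B * A) = 1.
Local Notation L := (Lam A B).

Lemma mulAB : A * B = 1 + q *: (B * A).
Proof. by rewrite -hrel subrK. Qed.

Lemma mulA_Lam : A * L = q *: (L * A).
Proof.
rewrite /Lam mulrBr mulrBl mulAB mulrDr mulr1 -scalerAr.
rewrite !(mulrA A B A) mulAB !mulrDl !mul1r -!scalerAl.
by rewrite [A + q *: _]addrC addrKA scalerBr.
Qed.

Lemma mulLam_B : L * B = q *: (B * L).
Proof.
rewrite /Lam mulrBr mulrBl mulAB -!(mulrA B A B) mulAB.
rewrite mulrDl mul1r -scalerAl -(mulrA B A B) mulAB.
rewrite !(mulrDr B 1) mulr1 -!scalerAr.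
by rewrite [B + q *: _]addrC addrKA scalerBr.
Qed.

Lemma scale_mulBA : (q - 1) *: (B * A) = L - 1.
Proof. by rewrite /Lam mulAB scalerBl scale1r addrAC [1 + _]addrC addrK. Qed.

Lemma scale_mulAB : (q - 1) *: (A * B) = q *: L - 1.
Proof. by rewrite scalerBl scale1r {2}mulAB /Lam scalerBr opprD addrA addrAC. Qed.

Lemma mul_LamA m n k l :
  L ^+ m * A ^+ n * (L ^+ k * A ^+ l) = q ^+ (n * k) *: (L ^+ (m + k) * A ^+ (n + l)).
Proof.
rewrite mulrA -(mulrA _ (A ^+ n)) (expr_mul_expr mulA_Lam) -scalerAr -scalerAl.
by rewrite !mulrA -exprD -mulrA -exprD.
Qed.

Lemma mul_BLam n m l k :
  B ^+ n * L ^+ m * (B ^+ l * L ^+ k) = q ^+ (m * l) *: (B ^+ (n + l) * L ^+ (m + k)).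
Proof.
rewrite mulrA -(mulrA _ (L ^+ m)) (expr_mul_expr mulLam_B) -scalerAr -scalerAl.
by rewrite !mulrA -exprD -mulrA -exprD.
Qed.

Hypothesis hq1 : q != 1.
Local Notation BApoly := ((q - 1)^-1 *: ('X - 1) : {poly F}).

Lemma mulBA_horner : B * A = horner_alg L BApoly.
Proof.
rewrite linearZ rmorphB /= horner_algX rmorph1 -scale_mulBA mulr_algl scalerA.
by rewrite mulVf ?scale1r // subr_eq0.
Qed.

Lemma mulAB_horner : A * B = horner_alg L (dilate q BApoly).
Proof.
rewrite /dilate comp_polyZ comp_polyB comp_polyX comp_polyC linearZ rmorphB /=.
rewrite linearZ /= horner_algX rmorph1 !mulr_algl -scale_mulAB scalerA.
by rewrite mulVf ?scale1r // subr_eq0.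
Qed.

Hypothesis hq0 : q != 0.

Lemma mulB_Lam : B * L = q^-1 *: (L * B).
Proof. by rewrite mulLam_B scalerA mulVf // scale1r. Qed.

Lemma expr_BA_AB l : exists Q, B ^+ l * A ^+ l = horner_alg L Q /\
  A ^+ l * B ^+ l = horner_alg L (dilate (q ^+ l) Q).
Proof.
elim: l => [|l [Q [hBA hAB]]].
  by exists 1; rewrite !expr0 mulr1 /dilate comp_polyC rmorph1.
exists (dilate (q^-1 ^+ l) BApoly * Q); split.
  have -> : B ^+ l.+1 * A ^+ l.+1 = B ^+ l * (B * A) * A ^+ l by rewrite exprSr exprS !mulrA.
  by rewrite mulBA_horner (expr_mul_horner mulB_Lam) -mulrA hBA rmorphM.
have -> : A ^+ l.+1 * B ^+ l.+1 = A * (A ^+ l * B ^+ l) * B by rewrite exprS exprSr !mulrA.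
rewrite hAB (mul_horner_dilate mulA_Lam) -mulrA mulAB_horner -rmorphM.
rewrite dilateM !dilate_dilate mulrC exprVn exprS mulrCA mulVf ?expf_neq0 // mulr1.
by rewrite -exprSr -exprS.
Qed.

End QWeyl.

Section Commutators.
Variables (F : fieldType) (q : F) (p : nat) (H : algType F) (A B : H).
Hypotheses (hrel : A * B - q *: (B * A) = 1) (hq0 : q != 0) (hq1 : q != 1).
Hypothesis hqp : q ^+ p = 1.
Hypothesis hbas_free : forall (s : seq hidx) (c : hidx -> F),
  uniq s -> \sum_(i <- s) c i *: hbas A B i = 0 -> forall i, i \in s -> c i = 0.
Local Notation L := (Lam A B).

Lemma expr_cross m k n l :
  (p %| m + k)%N -> (p %| n + l)%N -> q ^+ (n * k) = q ^+ (l * m).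
Proof.
move=> hmk hnl; apply: (mulIf (expf_neq0 (n * m) hq0)).
rewrite -!exprD -mulnDr -mulnDl (addnC k) (addnC l).
by rewrite (expr_dvd hqp (dvdn_mull _ hmk)) (expr_dvd hqp (dvdn_mulr _ hnl)).
Qed.

Lemma zero_at_special_comm_LamA m k n l : (0 < n + l)%N ->
  zero_at_special A B p (comm (L ^+ m * A ^+ n) (L ^+ k * A ^+ l)).
Proof.
move=> nl; rewrite /comm !(mul_LamA hrel) (addnC k) (addnC l) -scalerBl scalerAl.
rewrite -horner_algZXn; apply: zero_at_special_horner_mulA => // hp i hi.
rewrite coefZ coefXn; case: eqP => [ei | _]; last by rewrite mulr0.
by rewrite ei in hi; rewrite (expr_cross hi hp) subrr mul0r.
Qed.

Lemma zero_at_special_comm_BLam m k n l : (0 < n + l)%N ->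
  zero_at_special A B p (comm (B ^+ n * L ^+ m) (B ^+ l * L ^+ k)).
Proof.
move=> nl; rewrite /comm !(mul_BLam hrel) (addnC k) (addnC l) -scalerBl scalerAr.
rewrite -horner_algZXn; apply: zero_at_special_mulB_horner => // hp i hi.
rewrite coefZ coefXn; case: eqP => [ei | _]; last by rewrite mulr0.
by rewrite ei in hi; rewrite (mulnC m) (mulnC k) (expr_cross hi hp) subrr mul0r.
Qed.

Lemma XnM_dilateB_coef_eq0 s a b P i :
  (forall j, (p %| s + j)%N -> (p %| a + b * j)%N) -> (p %| i)%N ->
  ('X^s * (q ^+ a *: dilate (q ^+ b) P - P))`_i = 0.
Proof.
move=> hab hi; rewrite coef_XnM_dilateB; case: ltnP => // hsi.
by rewrite -exprM -exprD (expr_dvd hqp) ?subrr ?mul0r // hab // subnKC.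
Qed.

Lemma zero_at_special_comm_LamA_BLam_gt m k e l : (0 < e)%N ->
  zero_at_special A B p (comm (L ^+ m * A ^+ (e + l)) (B ^+ l * L ^+ k)).
Proof.
move=> he; have [Q [hBA hAB]] := expr_BA_AB hrel hq1 hq0 l.
have h1 : L ^+ m * A ^+ (e + l) * (B ^+ l * L ^+ k) =
    q ^+ (e * k) *: (horner_alg L ('X^(m + k) * dilate (q ^+ (e + l)) Q) * A ^+ e).
  have -> : L ^+ m * A ^+ (e + l) * (B ^+ l * L ^+ k) =
      L ^+ m * (A ^+ e * (A ^+ l * B ^+ l)) * L ^+ k by rewrite exprD !mulrA.
  rewrite hAB (expr_mul_horner (mulA_Lam hrel)) dilate_dilate -exprD (addnC l).
  rewrite -!mulrA (expr_mul_expr (mulA_Lam hrel)) -!scalerAr !mulrA.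
  by rewrite -(horner_alg_Xn L m) -(horner_alg_Xn L k) -!rmorphM mulrAC -exprD.
have h2 : q ^+ (l * (m + k)) *: (B ^+ l * L ^+ k * (L ^+ m * A ^+ (e + l))) =
    horner_alg L ('X^(m + k) * Q) * A ^+ e.
  have -> : B ^+ l * L ^+ k * (L ^+ m * A ^+ (e + l)) =
      B ^+ l * (L ^+ (m + k) * A ^+ l) * A ^+ e.
    by rewrite (addnC e) exprD (addnC m) exprD !mulrA.
  rewrite scalerAl scalerAr -(expr_mul_expr (mulA_Lam hrel)) mulrA hBA.
  by rewrite -horner_alg_Xn -rmorphM mulrC.
apply: (zero_at_specialZ (a := q ^+ (l * (m + k)))); first by rewrite expf_neq0.
have -> : q ^+ (l * (m + k)) *: comm (L ^+ m * A ^+ (e + l)) (B ^+ l * L ^+ k) =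
    horner_alg L ('X^(m + k) *
      (q ^+ (l * (m + k) + e * k) *: dilate (q ^+ (e + l)) Q - Q)) * A ^+ e.
  rewrite /comm scalerBr h1 h2 scalerA -exprD [in RHS]mulrBr [in RHS]rmorphB /=.
  by rewrite -scalerAr linearZ /= mulr_algl mulrBl scalerAl.
apply: zero_at_special_horner_mulA => // hpe i; apply: XnM_dilateB_coef_eq0 => j hj.
have -> : (l * (m + k) + e * k + (e + l) * j = l * (m + k + j) + e * (k + j))%N by ring.
exact: dvdn_add (dvdn_mull _ hj) (dvdn_mulr _ hpe).
Qed.

Lemma zero_at_special_comm_LamA_BLam_lt m k n e : (0 < e)%N ->
  zero_at_special A B p (comm (L ^+ m * A ^+ n) (B ^+ (n + e) * L ^+ k)).
Proof.
move=> he; have [Q [hBA hAB]] := expr_BA_AB hrel hq1 hq0 n.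
have h1 : L ^+ m * A ^+ n * (B ^+ (n + e) * L ^+ k) =
    q ^+ (e * m) *: (B ^+ e * horner_alg L ('X^(m + k) * dilate (q ^+ (n + e)) Q)).
  have -> : L ^+ m * A ^+ n * (B ^+ (n + e) * L ^+ k) =
      L ^+ m * (A ^+ n * B ^+ n) * B ^+ e * L ^+ k by rewrite exprD !mulrA.
  rewrite hAB -(horner_alg_Xn L m) -rmorphM (horner_mul_expr hq0 (mulLam_B hrel)).
  rewrite -(horner_alg_Xn L k) -mulrA -rmorphM.
  rewrite dilateM dilateXn dilate_dilate -exprD -!scalerAl mulrAC -exprD -exprM.
  by rewrite -mul_polyC rmorphM /= horner_algC mulr_algl scalerAr.
have h2 : q ^+ (n * (m + k)) *: (B ^+ (n + e) * L ^+ k * (L ^+ m * A ^+ n)) =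
    B ^+ e * horner_alg L ('X^(m + k) * Q).
  have -> : B ^+ (n + e) * L ^+ k * (L ^+ m * A ^+ n) =
      B ^+ e * (B ^+ n * (L ^+ (m + k) * A ^+ n)).
    by rewrite (addnC n) exprD (addnC m) exprD !mulrA.
  rewrite 2!scalerAr -(expr_mul_expr (mulA_Lam hrel)) (mulrA (B ^+ n)) hBA.
  by rewrite -horner_alg_Xn -rmorphM mulrC.
apply: (zero_at_specialZ (a := q ^+ (n * (m + k)))); first by rewrite expf_neq0.
have -> : q ^+ (n * (m + k)) *: comm (L ^+ m * A ^+ n) (B ^+ (n + e) * L ^+ k) =
    B ^+ e * horner_alg L ('X^(m + k) *
      (q ^+ (n * (m + k) + e * m) *: dilate (q ^+ (n + e)) Q - Q)).
  rewrite /comm scalerBr h1 h2 scalerA -exprD [in RHS]mulrBr [in RHS]rmorphB /=.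
  by rewrite -scalerAr linearZ /= mulr_algl mulrBr scalerAr.
apply: zero_at_special_mulB_horner => // hpe i; apply: XnM_dilateB_coef_eq0 => j hj.
have -> : (n * (m + k) + e * m + (n + e) * j = n * (m + k + j) + e * (m + j))%N by ring.
exact: dvdn_add (dvdn_mull _ hj) (dvdn_mulr _ hpe).
Qed.

Lemma zero_at_special_comm_LamA_BLam m k n l : n != l ->
  zero_at_special A B p (comm (L ^+ m * A ^+ n) (B ^+ l * L ^+ k)).
Proof.
case: ltngtP => // [nl | ln] _.
  by rewrite -(subnKC (ltnW nl)); apply: zero_at_special_comm_LamA_BLam_lt; rewrite subn_gt0.
by rewrite -(subnK (ltnW ln)); apply: zero_at_special_comm_LamA_BLam_gt; rewrite subn_gt0.
Qed.

End Commutators.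

Theorem lemma1 (F : fieldType) (q : F) (p : nat)
  (hq1 : q != 1) (hp : (0 < p)%N) (hqp : q ^+ p = 1)
  (hmin : forall j : nat, (0 < j < p)%N -> q ^+ j != 1)
  (H : algType F) (A B : H)
  (hrel : A * B - q *: (B * A) = 1)
  (hbasis : is_std_basis A B) :
  forall (m k n l : nat), (0 < n)%N -> (0 < l)%N ->
    let L := Lam A B in
    [/\ zero_at_special A B p (comm (L ^+ m) (L ^+ k * A ^+ l)),
        zero_at_special A B p (comm (L ^+ m) (B ^+ l * L ^+ k)),
        zero_at_special A B p (comm (L ^+ m * A ^+ n) (L ^+ k * A ^+ l)),
        (n != l -> zero_at_special A B p (comm (L ^+ m * A ^+ n) (B ^+ l * L ^+ k)))
      & zero_at_special A B p (comm (B ^+ n * L ^+ m) (B ^+ l * L ^+ k))].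
Proof.
move=> m k n l n_gt0 l_gt0 L.
have hq0 : q != 0.
  by apply: contra_eq_neq hqp => ->; rewrite expr0n eqn0Ngt hp eq_sym oner_neq0.
have hfree := hbasis.1.
have commLA := zero_at_special_comm_LamA hrel hq0 hqp hfree.
have commBL := zero_at_special_comm_BLam hrel hq0 hqp hfree.
split.
- by have := commLA m k 0 l l_gt0; rewrite expr0 mulr1.
- by have := commBL m k 0 l l_gt0; rewrite expr0 mul1r.
- by apply: commLA; rewrite addn_gt0 n_gt0.
- exact: zero_at_special_comm_LamA_BLam hrel hq0 hq1 hqp hfree m k n l.
- by apply: commBL; rewrite addn_gt0 n_gt0.
Qed.
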